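(* Let $\alpha_0>0$, $\omega_0\neq 0$, and $$\alpha^*_{pl}(\omega)=\alpha_0|\omega|+i\frac{2}{\pi}\alpha_0\,\omega\log\left|\frac{\omega}{\omega_0}\right|,\qquad\omega\in\mathbb{R}.$$ Then the function $K(\vec x,t)=\frac{1}{\sqrt{2\pi}}\mathcal{F}^{-1}\{e^{-\alpha^*_{pl}(\cdot)|\vec x|}\}(t)$ is not causal.
   Context: Fourier convention: $\mathcal{F}^{-1}\{\hat f\}(t)=\frac{1}{\sqrt{2\pi}}\int_{\mathbb{R}}e^{-i\omega t}\hat f(\omega)\,d\omega$ (tempered distributions). $K$ is causal if $t\mapsto K(\vec x,t)$ vanishes for $t<0$ for every $\vec x\in\mathbb{R}^3$. *)

From Stdlib Require Import Reals.
From Coquelicot Require Import Coquelicot.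
Open Scope R_scope.

Definition vec3 : Type := (R * R * R)%type.
Definition norm3 (x : vec3) : R :=
  let '(x1, x2, x3) := x in sqrt (x1 * x1 + x2 * x2 + x3 * x3).

Definition cexp (z : C) : C :=
  (exp (Re z) * cos (Im z), exp (Re z) * sin (Im z)).

Definition alpha_pl (a0 w0 w : R) : C :=
  (a0 * Rabs w, 2 / PI * a0 * w * ln (Rabs (w / w0))).

(* Inverse Fourier transform with the paper's convention, as an improper
   (absolutely convergent) integral over R:
   F^{-1}{f}(t) = 1/sqrt(2 pi) * int_R e^{-i w t} f(w) dw.
   [is_invFT f t v] : the integral converges and F^{-1}{f}(t) = v. *)
Definition is_invFT (f : R -> C) (t : R) (v : C) : Prop :=
  exists I : C,
    is_RInt_gen (fun w : R => Cmult (cexp (0, - (w * t))) (f w))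
      (Rbar_locally m_infty) (Rbar_locally p_infty) I
    /\ v = Cmult (RtoC (/ sqrt (2 * PI))) I.

Definition is_K (a0 w0 : R) (x : vec3) (t : R) (v : C) : Prop :=
  exists u : C,
    is_invFT (fun w => cexp (Copp (Cmult (alpha_pl a0 w0 w) (RtoC (norm3 x))))) t u
    /\ v = Cmult (RtoC (/ sqrt (2 * PI))) u.

From Stdlib Require Import Reals Lra.
From Coquelicot Require Import Coquelicot.
Open Scope R_scope.

(* Take c = |w0|, x = (1/(a0 c), 0, 0) and t = -1/(10 c) < 0.  The integrand
   defining K(x,t) is then exp(-|w|/c) e^{i phi(w/c)} with
   phi(u) = u/10 - (2/pi) u ln|u|; it is dominated by the integrable Laplace
   kernel exp(-|w|/c), so the improper integral converges.  For |u| <= 1 the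
   bound |u ln|u|| <= 1/2 gives |phi(u)| <= 1/10 + 1/pi, hence cos phi >= 9/10
   on [-c, c], while cos phi >= -1 elsewhere.  Therefore the real part of the
   integral is at least 2c (9/10 (1 - 1/e) - 1/e) > 0, and K(x,t) <> 0. *)

Lemma minus_plus_mid {G : AbelianGroup} (a u b : G) :
  minus (plus (plus a u) b) u = plus a b.
Proof.
  unfold minus. rewrite <- (plus_assoc a u b), (plus_comm u b), plus_assoc.
  rewrite <- plus_assoc. transitivity (plus (plus a b) zero); [apply f_equal, plus_opp_r | apply plus_zero_r].
Qed.

Lemma cexp_add (z1 z2 : C) : cexp (z1 + z2) = (cexp z1 * cexp z2)%C.
Proof.
  destruct z1 as [x1 y1], z2 as [x2 y2].
  unfold cexp, Cplus, Cmult; simpl.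
  rewrite exp_plus, cos_plus, sin_plus. f_equal; ring.
Qed.

Lemma norm_cexp (z : C) : @norm R_AbsRing C_R_NormedModule (cexp z) = exp (Re z).
Proof.
  destruct z as [x y].
  assert (Hn : forall p q : R, @norm R_AbsRing C_R_NormedModule (p, q) = sqrt (p ^ 2 + q ^ 2)).
  { intros p q. rewrite <- (pow2_abs p), <- (pow2_abs q). reflexivity. }
  unfold cexp; simpl Re; simpl Im. rewrite Hn.
  replace ((exp x * cos y) ^ 2 + (exp x * sin y) ^ 2) with (exp x ^ 2)
    by (rewrite <- (Rmult_1_r (exp x ^ 2)), <- (sin2_cos2 y); unfold Rsqr; ring).
  apply sqrt_pow2. left; apply exp_pos.
Qed.

Lemma ex_RInt_cexp (p q : R -> R) (a b : R) :
  (forall w, continuous p w) -> (forall w, continuous q w) ->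
  ex_RInt (fun w => cexp (p w, q w)) a b.
Proof.
  intros Hp Hq. apply ex_RInt_fct_extend_pair; simpl;
    apply (ex_RInt_continuous (V := R_CompleteNormedModule)); intros w _.
  - apply (continuous_mult (fun w => exp (p w)) (fun w => cos (q w)));
      [apply continuous_exp_comp | apply continuous_cos_comp]; auto.
  - apply (continuous_mult (fun w => exp (p w)) (fun w => sin (q w)));
      [apply continuous_exp_comp | apply continuous_sin_comp]; auto.
Qed.

Lemma is_RInt_gen_Re_ge (f : R -> C) (c m : R) (l : C) :
  is_RInt_gen f (Rbar_locally m_infty) (Rbar_locally p_infty) l ->
  (forall a b z, a <= - c -> c <= b -> is_RInt f a b z -> m <= Re z) ->
  m <= Re l.
Proof.
  intros Hl Hge.
  destruct (Rle_lt_dec m (Re l)) as [H|H]; [exact H | exfalso].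
  assert (He : 0 < m - Re l) by lra.
  destruct (proj1 (filterlimi_locally _ l) Hl (mkposreal _ He)) as [P Q [M1 HP] [M2 HQ] HPQ].
  set (a := Rmin M1 (- c) - 1). set (b := Rmax M2 c + 1).
  assert (Ha : a < M1 /\ a <= - c) by (unfold a; pose proof (Rmin_l M1 (- c)); pose proof (Rmin_r M1 (- c)); lra).
  assert (Hb : M2 < b /\ c <= b) by (unfold b; pose proof (Rmax_l M2 c); pose proof (Rmax_r M2 c); lra).
  destruct (HPQ a b (HP a (proj1 Ha)) (HQ b (proj1 Hb))) as [z [Hz [Hball _]]].
  pose proof (Hge a b z (proj2 Ha) (proj2 Hb) Hz).
  change (Rabs (Re z - Re l) < m - Re l) in Hball.
  pose proof (Rle_abs (Re z - Re l)). lra.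
Qed.

Lemma exp_le_compat (x y : R) : x <= y -> exp x <= exp y.
Proof. intros [H|H]; [left; apply exp_increasing, H | right; rewrite H; reflexivity]. Qed.

Lemma ln_le_sub_1 (y : R) : 0 < y -> ln y <= y - 1.
Proof.
  intros Hy. rewrite <- (ln_exp (y - 1)).
  apply ln_le; [exact Hy|]. pose proof (exp_ineq1_le (y - 1)). lra.
Qed.

Lemma abs_xlnx_le (u : R) : 0 < u <= 1 -> Rabs (u * ln u) <= 2 * (sqrt u - u).
Proof.
  intros Hu.
  set (s := sqrt u).
  assert (Hs : 0 < s) by (apply sqrt_lt_R0; lra).
  assert (Hus : u = s * s) by (unfold s; rewrite sqrt_sqrt; lra).
  assert (Hln : ln u <= 0) by (rewrite <- ln_1; apply ln_le; lra).
  assert (Hlns : ln u = 2 * ln s) by (rewrite Hus at 1; rewrite ln_mult by lra; ring).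
  assert (Hinv : - ln s <= / s - 1).
  { rewrite <- ln_Rinv by lra. apply ln_le_sub_1, Rinv_0_lt_compat, Hs. }
  assert (Hmul : - ln s * s <= 1 - s).
  { replace (1 - s) with ((/ s - 1) * s) by (field; lra).
    apply Rmult_le_compat_r; lra. }
  rewrite Rabs_left1 by (apply Rmult_le_0_l; lra).
  rewrite Hlns, Hus. nra.
Qed.

Lemma abs_mul_ln_abs_le (x : R) :
  Rabs x <= 1 -> Rabs (x * ln (Rabs x)) <= 2 * (sqrt (Rabs x) - Rabs x).
Proof.
  intros Hx. destruct (Req_dec x 0) as [->|Hx0].
  - rewrite Rmult_0_l, Rabs_R0, sqrt_0. lra.
  - replace (Rabs (x * ln (Rabs x))) with (Rabs (Rabs x * ln (Rabs x)))
      by (rewrite !Rabs_mult, Rabs_Rabsolu; reflexivity).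
    apply abs_xlnx_le. split; [apply Rabs_pos_lt|]; assumption.
Qed.

Lemma continuous_mul_ln_abs (x : R) : continuous (fun y => y * ln (Rabs y)) x.
Proof.
  destruct (Req_dec x 0) as [->|Hx].
  - apply filterlim_locally. intros eps.
    set (d := Rmin 1 ((eps / 2) ^ 2)).
    assert (Hd : 0 < d) by (apply Rmin_glb_lt; [lra|]; apply pow_lt, is_pos_div_2).
    exists (mkposreal d Hd). intros y Hy.
    change (Rabs (y - 0) < d) in Hy. rewrite Rminus_0_r in Hy.
    change (Rabs (y * ln (Rabs y) - 0 * ln (Rabs 0)) < eps).
    rewrite Rmult_0_l, Rminus_0_r.
    assert (Hy1 : Rabs y <= 1) by (pose proof (Rmin_l 1 ((eps / 2) ^ 2)); unfold d in Hy; lra).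
    assert (Hsq : sqrt (Rabs y) < eps / 2).
    { rewrite <- (sqrt_pow2 (eps / 2)) by (left; apply is_pos_div_2).
      apply sqrt_lt_1_alt. split; [apply Rabs_pos|].
      pose proof (Rmin_r 1 ((eps / 2) ^ 2)); unfold d in Hy; lra. }
    pose proof (abs_mul_ln_abs_le y Hy1). pose proof (Rabs_pos y). lra.
  - apply (continuous_mult (fun y => y) (fun y => ln (Rabs y))); [apply continuous_id|].
    apply (continuous_comp Rabs ln); [apply continuous_Rabs|].
    apply continuous_ln, Rabs_pos_lt, Hx.
Qed.

Section Laplace.

Variable c : R.
Hypothesis c_pos : 0 < c.

Definition laplace (w : R) : R := exp (- (Rabs w / c)).

Definition laplace_prim (x : R) : R :=
  if Rle_dec 0 x then c * (1 - exp (- (x / c))) else - (c * (1 - exp (x / c))).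

Lemma laplace_prim_nonneg (x : R) : 0 <= x -> laplace_prim x = c * (1 - exp (- (x / c))).
Proof. intros Hx. unfold laplace_prim. destruct (Rle_dec 0 x); [reflexivity | lra]. Qed.

Lemma laplace_prim_nonpos (x : R) : x <= 0 -> laplace_prim x = - (c * (1 - exp (x / c))).
Proof.
  intros Hx. unfold laplace_prim. destruct (Rle_dec 0 x); [|reflexivity].
  replace x with 0 by lra. rewrite Rdiv_0_l, Ropp_0, exp_0. ring.
Qed.

Lemma is_RInt_laplace_0 (x : R) : is_RInt laplace 0 x (laplace_prim x).
Proof.
  destruct (Rle_dec 0 x) as [Hx|Hx].
  - rewrite laplace_prim_nonneg by exact Hx.
    replace (c * (1 - exp (- (x / c)))) with
      (minus (- c * exp (- (x / c))) (- c * exp (- (0 / c))))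
      by (unfold minus, plus, opp; simpl; rewrite Rdiv_0_l, Ropp_0, exp_0; ring).
    apply (is_RInt_ext (fun w => exp (- (w / c)))).
    + intros w Hw. rewrite Rmin_left, Rmax_right in Hw by lra.
      unfold laplace. rewrite Rabs_pos_eq by lra. reflexivity.
    + apply (is_RInt_derive (V := R_CompleteNormedModule) (fun w => - c * exp (- (w / c)))).
      * intros w _. auto_derive; [exact I|]. unfold Rdiv. field. lra.
      * intros w _. apply (ex_derive_continuous (V := R_NormedModule)). auto_derive. exact I.
  - rewrite laplace_prim_nonpos by lra.
    replace (- (c * (1 - exp (x / c)))) with
      (minus (c * exp (x / c)) (c * exp (0 / c)))
      by (unfold minus, plus, opp; simpl; rewrite Rdiv_0_l, exp_0; ring).
    apply (is_RInt_ext (fun w => exp (w / c))).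
    + intros w Hw. rewrite Rmin_right, Rmax_left in Hw by lra.
      unfold laplace. rewrite Rabs_left by lra. f_equal. field. lra.
    + apply (is_RInt_derive (V := R_CompleteNormedModule) (fun w => c * exp (w / c))).
      * intros w _. auto_derive; [exact I|]. unfold Rdiv. field. lra.
      * intros w _. apply (ex_derive_continuous (V := R_NormedModule)). auto_derive. exact I.
Qed.

Lemma is_RInt_laplace (a b : R) :
  is_RInt laplace a b (laplace_prim b - laplace_prim a).
Proof.
  replace (laplace_prim b - laplace_prim a)
    with (plus (opp (laplace_prim a)) (laplace_prim b))
    by (unfold plus, opp; simpl; ring).
  exact (is_RInt_Chasles _ _ _ _ _ _
           (is_RInt_swap _ _ _ _ (is_RInt_laplace_0 a)) (is_RInt_laplace_0 b)).
Qed.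

Lemma laplace_prim_tail (M x y : R) : 0 <= M ->
  (M <= x /\ M <= y) \/ (x <= - M /\ y <= - M) ->
  Rabs (laplace_prim y - laplace_prim x) <= c * exp (- (M / c)).
Proof.
  intros HM Hxy.
  assert (Hmono : forall u, M <= u -> exp (- (u / c)) <= exp (- (M / c))).
  { intros u Hu. apply exp_le_compat, Ropp_le_contravar.
    apply Rmult_le_compat_r; [left; apply Rinv_0_lt_compat|]; lra. }
  assert (Hc : forall u, 0 < c * exp u) by (intros u; apply Rmult_lt_0_compat; [lra | apply exp_pos]).
  assert (HcM : forall u v, exp u <= exp v -> c * exp u <= c * exp v)
    by (intros u v Huv; apply Rmult_le_compat_l; lra).
  destruct Hxy as [[Hx Hy]|[Hx Hy]].
  - rewrite !laplace_prim_nonneg by lra.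
    pose proof (HcM _ _ (Hmono x Hx)). pose proof (HcM _ _ (Hmono y Hy)).
    pose proof (Hc (- (x / c))). pose proof (Hc (- (y / c))).
    apply Rabs_le. lra.
  - rewrite !laplace_prim_nonpos by lra.
    replace (x / c) with (- (- x / c)) by (field; lra).
    replace (y / c) with (- (- y / c)) by (field; lra).
    pose proof (HcM _ _ (Hmono (- x) ltac:(lra))). pose proof (HcM _ _ (Hmono (- y) ltac:(lra))).
    pose proof (Hc (- (- x / c))). pose proof (Hc (- (- y / c))).
    apply Rabs_le. lra.
Qed.

Lemma norm_RInt_le_laplace {V : NormedModule R_AbsRing} (f : R -> V) (x y : R) (A : V) :
  (forall w, norm (f w) <= laplace w) -> is_RInt f x y A ->
  norm A <= Rabs (laplace_prim y - laplace_prim x).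
Proof.
  intros Hf HA. destruct (Rle_dec x y) as [Hxy|Hxy].
  - eapply Rle_trans; [| apply Rle_abs].
    exact (norm_RInt_le f laplace x y A _ Hxy (fun w _ => Hf w) HA (is_RInt_laplace x y)).
  - rewrite <- norm_opp, Rabs_minus_sym. eapply Rle_trans; [| apply Rle_abs].
    exact (norm_RInt_le f laplace y x _ _ ltac:(lra) (fun w _ => Hf w)
             (is_RInt_swap _ _ _ _ HA) (is_RInt_laplace y x)).
Qed.

Lemma laplace_tail_lt (eps : R) : 0 < eps ->
  exists M, 0 <= M /\ c * exp (- (M / c)) < eps.
Proof.
  intros He. set (L := ln (c / eps)).
  exists (c * (Rabs L + 1)). split.
  - apply Rmult_le_pos; [lra|]. pose proof (Rabs_pos L). lra.
  - replace (c * (Rabs L + 1) / c) with (Rabs L + 1) by (field; lra).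
    assert (Hlt : exp (- (Rabs L + 1)) < exp (- L)).
    { apply exp_increasing. pose proof (Rle_abs L). lra. }
    assert (HL : exp L = c / eps) by (apply exp_ln, Rdiv_lt_0_compat; lra).
    rewrite (exp_Ropp L), HL in Hlt.
    replace eps with (c * / (c / eps)) by (field; lra).
    apply Rmult_lt_compat_l; lra.
Qed.

Lemma ex_RInt_gen_laplace_dominated {V : CompleteNormedModule R_AbsRing} (f : R -> V) :
  (forall a b, ex_RInt f a b) -> (forall w, norm (f w) <= laplace w) ->
  exists l, is_RInt_gen f (Rbar_locally m_infty) (Rbar_locally p_infty) l.
Proof.
  intros Hex Hf.
  assert (Hwd : filter_prod (Rbar_locally m_infty) (Rbar_locally p_infty)
    (fun ab : R * R => (exists y, is_RInt f (fst ab) (snd ab) y) /\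
       (forall y1 y2, is_RInt f (fst ab) (snd ab) y1 -> is_RInt f (fst ab) (snd ab) y2 -> y1 = y2))).
  { apply filter_forall. intros [a b]. split; [apply Hex|].
    intros y1 y2 H1 H2. rewrite <- (is_RInt_unique _ _ _ _ H1). exact (is_RInt_unique _ _ _ _ H2). }
  apply (proj1 (filterlimi_locally_cauchy _ Hwd)).
  intros eps.
  destruct (laplace_tail_lt (eps / 2) (is_pos_div_2 eps)) as [M [HM Htail]].
  exists (fun ab : R * R => fst ab < - M /\ M < snd ab). split.
  { apply (Filter_prod _ _ _ (fun x => x < - M) (fun y => M < y)).
    - exists (- M). auto.
    - exists M. auto.
    - simpl. auto. }
  intros [ua ub] [va vb] [Hua Hub] [Hva Hvb] u v Hu Hv; simpl in *.
  destruct (Hex va ua) as [A HA], (Hex ub vb) as [B HB].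
  (* The two integrals differ by the integrals over the tails [va, ua] and [ub, vb]. *)
  assert (Hsplit : v = plus (plus A u) B).
  { rewrite <- (is_RInt_unique _ _ _ _ Hv).
    apply is_RInt_unique, (is_RInt_Chasles _ _ ub), HB.
    apply (is_RInt_Chasles _ _ ua); assumption. }
  apply (norm_compat1 (K := R_AbsRing) (V := V)).
  rewrite Hsplit, (minus_plus_mid (G := NormedModule.AbelianGroup R_AbsRing V)).
  eapply Rle_lt_trans; [apply norm_triangle|].
  pose proof (norm_RInt_le_laplace f va ua A Hf HA).
  pose proof (norm_RInt_le_laplace f ub vb B Hf HB).
  pose proof (laplace_prim_tail M va ua HM ltac:(lra)).
  pose proof (laplace_prim_tail M ub vb HM ltac:(lra)).
  lra.
Qed.

Lemma RInt_ge_laplace (f : R -> R) (k a b : R) :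
  (forall x y, ex_RInt f x y) ->
  (forall w, - laplace w <= f w) ->
  (forall w, - c <= w <= c -> k * laplace w <= f w) ->
  a <= - c -> c <= b ->
  2 * c * (k * (1 - exp (-1)) - exp (-1)) <= RInt f a b.
Proof.
  intros Hex Hlow Hmid Ha Hb.
  assert (Hcmp : forall g G x y, x <= y -> is_RInt g x y G ->
            (forall w, x <= w <= y -> g w <= f w) -> G <= RInt f x y).
  { intros g G x y Hxy HG Hgf. rewrite <- (is_RInt_unique _ _ _ _ HG).
    apply RInt_le; [exact Hxy | exists G; exact HG | apply Hex |].
    intros w Hw. apply Hgf. lra. }
  assert (Hout : forall x y, x <= y ->
            - (laplace_prim y - laplace_prim x) <= RInt f x y).
  { intros x y Hxy. apply (Hcmp (fun w => - laplace w)); [exact Hxy| |intros; apply Hlow].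
    exact (is_RInt_opp (V := R_NormedModule) _ _ _ _ (is_RInt_laplace x y)). }
  assert (Hin : k * (laplace_prim c - laplace_prim (- c)) <= RInt f (- c) c).
  { apply (Hcmp (fun w => k * laplace w)); [lra| |exact Hmid].
    exact (is_RInt_scal (V := R_NormedModule) _ _ _ k _ (is_RInt_laplace (- c) c)). }
  pose proof (Hout a (- c) Ha) as Hleft. pose proof (Hout c b Hb) as Hright.
  pose proof (laplace_prim_tail c a (- c) ltac:(lra) ltac:(lra)) as Tleft.
  pose proof (laplace_prim_tail c c b ltac:(lra) ltac:(lra)) as Tright.
  rewrite laplace_prim_nonneg, laplace_prim_nonpos in Hin by lra.
  replace (- c / c) with (- (c / c)) in Hin by (field; lra).
  rewrite Rdiv_diag in Hin, Tleft, Tright by lra.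
  replace (- (1)) with (-1) in Hin, Tleft, Tright by ring.
  rewrite <- (RInt_Chasles f a (- c) b), <- (RInt_Chasles f (- c) c b) by apply Hex.
  pose proof (Rle_abs (laplace_prim (- c) - laplace_prim a)).
  pose proof (Rle_abs (laplace_prim b - laplace_prim c)).
  unfold plus; simpl. lra.
Qed.

End Laplace.

Definition probe_phase (u : R) : R := u / 10 - 2 / PI * (u * ln (Rabs u)).

Lemma continuous_probe_phase (u : R) : continuous probe_phase u.
Proof.
  apply (continuous_minus (fun u => u / 10) (fun u => 2 / PI * (u * ln (Rabs u)))).
  - apply (continuous_scal_l (K := R_AbsRing) (fun u => u) (/ 10)), continuous_id.
  - apply (continuous_scal_r (K := R_AbsRing) (2 / PI) (fun u => u * ln (Rabs u))).
    apply continuous_mul_ln_abs.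
Qed.

Lemma abs_probe_phase_le (u : R) : Rabs u <= 1 -> Rabs (probe_phase u) <= 1 / 10 + 1 / PI.
Proof.
  intros Hu. pose proof PI_RGT_0.
  pose proof (abs_mul_ln_abs_le u Hu) as Hxl.
  assert (Hhalf : 2 * (sqrt (Rabs u) - Rabs u) <= 1 / 2).
  { rewrite <- (sqrt_sqrt (Rabs u)) at 2 by apply Rabs_pos.
    pose proof (Rle_0_sqr (2 * sqrt (Rabs u) - 1)). unfold Rsqr in *. lra. }
  assert (Hlin : Rabs (u / 10) <= 1 / 10).
  { unfold Rdiv. rewrite Rabs_mult, (Rabs_pos_eq (/ 10)) by lra. lra. }
  assert (Hlog : Rabs (2 / PI * (u * ln (Rabs u))) <= 1 / PI).
  { rewrite Rabs_mult, (Rabs_pos_eq (2 / PI)) by (left; apply Rdiv_lt_0_compat; lra).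
    replace (1 / PI) with (2 / PI * (1 / 2)) by (field; lra).
    apply Rmult_le_compat_l; [left; apply Rdiv_lt_0_compat|]; lra. }
  unfold probe_phase. eapply Rle_trans; [apply Rabs_triang|]. rewrite Rabs_Ropp. lra.
Qed.

Lemma cos_ge_9_10 (x : R) : Rabs x <= 1 / 10 + 1 / PI -> 9 / 10 <= cos x.
Proof.
  intros Hx. pose proof PI2_3_2.
  assert (Hpi : 1 / PI < 1 / 3) by (apply Rmult_lt_compat_l, Rinv_lt_contravar; lra).
  apply Rabs_le_between in Hx.
  destruct (pre_cos_bound x 0) as [Hcos _]; [lra | lra |].
  replace (cos_approx x (2 * 0 + 1)) with (1 - x ^ 2 / 2) in Hcos
    by (unfold cos_approx, cos_term; simpl; field).
  nra.
Qed.

(* The integrand of K(x,t) at x = (1/(a0 |w0|), 0, 0), t = -1/(10 |w0|), with c = |w0|. *)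
Definition probe_integrand (c w : R) : C := cexp (- (Rabs w / c), probe_phase (w / c)).

Lemma invFT_integrand_probe (a0 w0 w : R) : 0 < a0 -> w0 <> 0 ->
  Cmult (cexp (0, - (w * - / (10 * Rabs w0))))
    (cexp (Copp (Cmult (alpha_pl a0 w0 w) (RtoC (/ (a0 * Rabs w0)))))) =
  probe_integrand (Rabs w0) w.
Proof.
  intros Ha Hw0. assert (Hc : 0 < Rabs w0) by (apply Rabs_pos_lt, Hw0).
  assert (Habs : Rabs (w / w0) = Rabs (w / Rabs w0)).
  { rewrite !Rabs_div, Rabs_Rabsolu by lra. reflexivity. }
  rewrite <- cexp_add. unfold probe_integrand, probe_phase, alpha_pl.
  unfold Cplus, Copp, Cmult, RtoC; simpl. rewrite Habs.
  pose proof PI_RGT_0. f_equal. f_equal; field; repeat split; lra.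
Qed.

Lemma norm_probe_integrand (c w : R) :
  @norm R_AbsRing C_R_NormedModule (probe_integrand c w) = laplace c w.
Proof. apply norm_cexp. Qed.

Lemma continuous_probe_modulus (c w : R) : continuous (fun w => - (Rabs w / c)) w.
Proof.
  apply (continuous_opp (fun w => Rabs w / c)).
  apply (continuous_mult Rabs (fun _ => / c)); [apply continuous_Rabs | apply continuous_const].
Qed.

Lemma continuous_probe_phase_scaled (c w : R) : continuous (fun w => probe_phase (w / c)) w.
Proof.
  apply (continuous_comp (fun w => w / c) probe_phase); [|apply continuous_probe_phase].
  apply (continuous_mult (fun w => w) (fun _ => / c)); [apply continuous_id | apply continuous_const].
Qed.

Lemma ex_RInt_probe_integrand (c a b : R) : ex_RInt (probe_integrand c) a b.
Proof.
  apply (ex_RInt_cexp (fun w => - (Rabs w / c)) (fun w => probe_phase (w / c)));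
    [apply continuous_probe_modulus | apply continuous_probe_phase_scaled].
Qed.

Lemma Re_RInt_probe_integrand_ge (c a b : R) (z : C) : 0 < c ->
  a <= - c -> c <= b -> is_RInt (probe_integrand c) a b z ->
  2 * c * (9 / 10 * (1 - exp (-1)) - exp (-1)) <= Re z.
Proof.
  intros Hc Ha Hb Hz.
  set (g := fun w => laplace c w * cos (probe_phase (w / c))).
  assert (HRe : Re z = RInt g a b).
  { symmetry. apply is_RInt_unique. exact (is_RInt_fct_extend_fst _ _ _ _ Hz). }
  rewrite HRe. apply RInt_ge_laplace; [exact Hc | | | | exact Ha | exact Hb].
  - intros x y. apply (ex_RInt_continuous (V := R_CompleteNormedModule)). intros w _.
    apply (continuous_mult (laplace c) (fun w => cos (probe_phase (w / c)))).
    + apply continuous_exp_comp, continuous_probe_modulus.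
    + apply continuous_cos_comp, continuous_probe_phase_scaled.
  - intros w. unfold g. pose proof (exp_pos (- (Rabs w / c))). pose proof (COS_bound (probe_phase (w / c))).
    unfold laplace. nra.
  - intros w Hw. unfold g. rewrite (Rmult_comm (laplace c w)).
    apply Rmult_le_compat_r; [left; apply exp_pos|].
    apply cos_ge_9_10, abs_probe_phase_le.
    rewrite Rabs_div, (Rabs_pos_eq c) by lra.
    replace 1 with (c / c) by (field; lra).
    apply Rmult_le_compat_r; [left; apply Rinv_0_lt_compat; lra | apply Rabs_le; lra].
Qed.

Lemma exp_neg1_margin : 0 < 9 / 10 * (1 - exp (-1)) - exp (-1).
Proof.
  assert (Hhalf := exp_ineq1 (1 / 2) ltac:(lra)).
  assert (He : exp 1 = exp (1 / 2) * exp (1 / 2)) by (rewrite <- exp_plus; f_equal; lra).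
  assert (Hinv : exp (-1) * exp 1 = 1) by (rewrite <- exp_plus; replace (-1 + 1) with 0 by ring; apply exp_0).
  pose proof (exp_pos (-1)). nra.
Qed.

Lemma probe_integral (c : R) : 0 < c ->
  exists l, is_RInt_gen (probe_integrand c) (Rbar_locally m_infty) (Rbar_locally p_infty) l
    /\ 0 < Re l.
Proof.
  intros Hc.
  destruct (ex_RInt_gen_laplace_dominated c Hc (V := C_R_CompleteNormedModule) (probe_integrand c))
    as [l Hl]; [apply ex_RInt_probe_integrand | intros w; rewrite norm_probe_integrand; lra |].
  exists l. split; [exact Hl|].
  apply Rlt_le_trans with (2 * c * (9 / 10 * (1 - exp (-1)) - exp (-1))).
  - pose proof exp_neg1_margin. apply Rmult_lt_0_compat; lra.
  - apply (is_RInt_gen_Re_ge _ c _ _ Hl). intros a b z. apply Re_RInt_probe_integrand_ge, Hc.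
Qed.

Theorem theorem4 (a0 w0 : R) (ha0 : 0 < a0) (hw0 : w0 <> 0) :
  exists (x : vec3) (t : R) (v : C),
    x <> (0, 0, 0) /\ t < 0 /\ is_K a0 w0 x t v /\ v <> 0%C.
Proof.
  set (c := Rabs w0). assert (Hc : 0 < c) by (apply Rabs_pos_lt, hw0).
  set (r := / (a0 * c)). assert (Hr : 0 < r) by (apply Rinv_0_lt_compat, Rmult_lt_0_compat; lra).
  set (k := / sqrt (2 * PI)).
  assert (Hk : 0 < k) by (apply Rinv_0_lt_compat, sqrt_lt_R0; pose proof PI_RGT_0; lra).
  destruct (probe_integral c Hc) as [l [Hl Hpos]].
  exists (r, 0, 0), (- / (10 * c)), (RtoC k * (RtoC k * l))%C.
  split; [|split; [|split]].
  - intros H. injection H. lra.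
  - apply Ropp_lt_gt_0_contravar, Rinv_0_lt_compat. lra.
  - assert (Hn : norm3 (r, 0, 0) = r).
    { unfold norm3. replace (r * r + 0 * 0 + 0 * 0) with (r ^ 2) by ring. apply sqrt_pow2. lra. }
    exists (RtoC k * l)%C. split; [|reflexivity]. exists l. split; [|reflexivity].
    rewrite Hn. apply (is_RInt_gen_ext (probe_integrand c)); [|exact Hl].
    apply filter_forall. intros ab w _. symmetry. apply invFT_integrand_probe; assumption.
  - intros Hv. apply (f_equal Re) in Hv. simpl in Hv.
    assert (0 < k * (k * Re l)) by (apply Rmult_lt_0_compat; [|apply Rmult_lt_0_compat]; lra).
    unfold Re in *. nra.
Qed.
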